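(* Let $(A,\cdot,\alpha)$ be a Hom-associative algebra, $(V,l,r,\beta)$ an $A$-bimodule and $T:V\to A$ an $\mathcal{O}$-operator associated to $(V,l,r,\beta)$. Define $u\triangleright v:=l(T(u))v$ and $u\triangleleft v:=r(T(v))u$ for $u,v\in V$. Then $(V,\triangleright,\triangleleft,\beta)$ is a Hom-$L$-dendriform algebra.
   Context: A Hom-associative algebra $(A,\cdot,\alpha)$: $\cdot$ bilinear, $\alpha$ linear, $(x\cdot y)\cdot\alpha(z)=\alpha(x)\cdot(y\cdot z)$. An $A$-bimodule $(V,l,r,\beta)$: a vector space $V$, linear $\beta:V\to V$, linear maps $l,r:A\to\mathfrak{gl}(V)$ with $l(x\cdot y)\beta=l(\alpha(x))l(y)$, $r(\alpha(y))l(x)=l(\alpha(x))r(y)$, $r(\alpha(y))r(x)=r(x\cdot y)\beta$ for all $x,y\in A$. An $\mathcal{O}$-operator associated to $(V,l,r,\beta)$ is a linear $T:V\to A$ with $\alpha T=T\beta$ and $T(u)\cdot T(v)=T(l(T(u))v+r(T(v))u)$ for all $u,v\in V$. A Hom-$L$-dendriform algebra is a vector space $V$ with bilinear $\triangleleft,\triangleright$ and linear $\beta$ such that for all $u,v,w$: $\beta(u)\triangleright(v\triangleright w)=(u\triangleright v)\triangleright\beta(w)+(u\triangleleft v)\triangleright\beta(w)+\beta(v)\triangleright(u\triangleright w)-(v\triangleleft u)\triangleright\beta(w)-(v\triangleright u)\triangleright\beta(w)$ and $\beta(u)\triangleright(v\triangleleft w)=(u\triangleright v)\triangleleft\beta(w)+\beta(v)\triangleleft(u\triangleright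 w)+\beta(v)\triangleleft(u\triangleleft w)-(v\triangleleft u)\triangleleft\beta(w)$. *)

From HB Require Import structures.
From mathcomp Require Import all_boot all_algebra.
Set Implicit Arguments. Unset Strict Implicit. Unset Printing Implicit Defensive.
Import GRing.Theory.
Local Open Scope ring_scope.

Definition is_bilinear (K : fieldType) (U W X : lmodType K) (f : U -> W -> X) :=
  (forall w, linear (fun u => f u w)) /\ (forall u, linear (f u)).

Definition HomAssociative (K : fieldType) (A : lmodType K)
  (mul : A -> A -> A) (alpha : A -> A) :=
  [/\ is_bilinear mul, linear alpha &
      forall x y z, mul (mul x y) (alpha z) = mul (alpha x) (mul y z)].

Definition HomBimodule (K : fieldType) (A V : lmodType K)
  (mul : A -> A -> A) (alpha : A -> A)
  (l r : A -> V -> V) (beta : V -> V) :=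
  [/\ is_bilinear l, is_bilinear r, linear beta &
      [/\ (forall x y v, l (mul x y) (beta v) = l (alpha x) (l y v)),
          (forall x y v, r (alpha y) (l x v) = l (alpha x) (r y v)) &
          (forall x y v, r (alpha y) (r x v) = r (mul x y) (beta v))]].

Definition OOperator (K : fieldType) (A V : lmodType K)
  (mul : A -> A -> A) (alpha : A -> A)
  (l r : A -> V -> V) (beta : V -> V) (T : V -> A) :=
  [/\ linear T,
      (forall v, alpha (T v) = T (beta v)) &
      (forall u v, mul (T u) (T v) = T (l (T u) v + r (T v) u))].

(* Hom-L-dendriform algebra (V, lt, gt, beta): lt = triangleleft, gt = triangleright *)
Definition HomLDendriform (K : fieldType) (V : lmodType K)
  (lt gt : V -> V -> V) (beta : V -> V) :=
  [/\ is_bilinear lt, is_bilinear gt, linear beta,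
      (forall u v w,
         gt (beta u) (gt v w) =
         gt (gt u v) (beta w) + gt (lt u v) (beta w) + gt (beta v) (gt u w)
         - gt (lt v u) (beta w) - gt (gt v u) (beta w)) &
      (forall u v w,
         gt (beta u) (lt v w) =
         lt (gt u v) (beta w) + lt (beta v) (gt u w) + lt (beta v) (lt u w)
         - lt (lt v u) (beta w))].

From HB Require Import structures.
From mathcomp Require Import all_boot all_algebra.
Set Implicit Arguments. Unset Strict Implicit. Unset Printing Implicit Defensive.
Local Open Scope ring_scope.
Import GRing.Theory.

(* With u |> v := l (T u) v and u <| v := r (T v) u, the O-operator identity
   reads T u * T v = T (u |> v + u <| v).  Substituting it into the three
   bimodule axioms, and using alpha T = T beta, turns them into
     beta u |> (v |> w) = (u |> v + u <| v) |> beta w,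
     beta u |> (v <| w) = (u |> v) <| beta w,
     beta v <| (u |> w + u <| w) = (v <| u) <| beta w,
   from which both Hom-L-dendriform identities follow by cancellation. *)

Lemma linear_morphD (K : fieldType) (U W : lmodType K) (f : U -> W) :
  linear f -> {morph f : x y / x + y}.
Proof. by move=> f_lin x y; have := f_lin 1 x y; rewrite !scale1r. Qed.

Section Bilinear.
Variables (K : fieldType) (U U' W X : lmodType K).

Lemma is_bilinear_flip (f : U -> W -> X) :
  is_bilinear f -> is_bilinear (fun w u => f u w).
Proof. by case=> f_linl f_linr; split. Qed.

Lemma is_bilinear_compl (f : U -> W -> X) (g : U' -> U) :
  linear g -> is_bilinear f -> is_bilinear (fun u w => f (g u) w).
Proof.
move=> g_lin [f_linl f_linr]; split=> [w a x y | u] /=; last exact: f_linr.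
by rewrite g_lin f_linl.
Qed.

End Bilinear.

Section OOperatorIdentities.
Variables (K : fieldType) (A V : lmodType K).
Variables (mul : A -> A -> A) (alpha : A -> A).
Variables (l r : A -> V -> V) (beta : V -> V) (T : V -> A).

Local Notation "u |> v" := (l (T u) v) (at level 40, left associativity).
Local Notation "u <| v" := (r (T v) u) (at level 40, left associativity).

Hypothesis l_additive : forall x y v, l (x + y) v = l x v + l y v.
Hypothesis r_additive : forall x y v, r (x + y) v = r x v + r y v.
Hypothesis l_mul : forall x y v, l (mul x y) (beta v) = l (alpha x) (l y v).
Hypothesis r_l_comm : forall x y v, r (alpha y) (l x v) = l (alpha x) (r y v).
Hypothesis r_mul : forall x y v, r (alpha y) (r x v) = r (mul x y) (beta v).
Hypothesis T_additive : {morph T : u v / u + v}.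
Hypothesis alphaT : forall v, alpha (T v) = T (beta v).
Hypothesis T_Ooperator : forall u v, mul (T u) (T v) = T (u |> v + u <| v).

Lemma trir_beta_trir u v w :
  beta u |> (v |> w) = (u |> v) |> beta w + (u <| v) |> beta w.
Proof. by rewrite -alphaT -l_mul T_Ooperator T_additive l_additive. Qed.

Lemma trir_beta_tril u v w : beta u |> (v <| w) = (u |> v) <| beta w.
Proof. by rewrite -!alphaT r_l_comm. Qed.

Lemma tril_beta_trirD u v w :
  beta v <| (u |> w) + beta v <| (u <| w) = (v <| u) <| beta w.
Proof. by rewrite -r_additive -T_additive -T_Ooperator -r_mul alphaT. Qed.

End OOperatorIdentities.

Theorem mainTheorem17 (K : fieldType) (A V : lmodType K)
  (mul : A -> A -> A) (alpha : A -> A)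
  (l r : A -> V -> V) (beta : V -> V) (T : V -> A) :
  HomAssociative mul alpha ->
  HomBimodule mul alpha l r beta ->
  OOperator mul alpha l r beta T ->
  HomLDendriform (fun u v => r (T v) u) (fun u v => l (T u) v) beta.
Proof.
move=> _ [l_bilin r_bilin beta_lin [l_mul r_l_comm r_mul]].
move=> [T_lin alphaT T_Ooperator].
have T_additive := linear_morphD T_lin.
have l_additive x y v := linear_morphD (l_bilin.1 v) x y.
have r_additive x y v := linear_morphD (r_bilin.1 v) x y.
split=> //.
- exact: is_bilinear_flip (is_bilinear_compl T_lin r_bilin).
- exact: is_bilinear_compl T_lin l_bilin.
- move=> u v w /=.
  rewrite !(trir_beta_trir l_additive l_mul T_additive alphaT T_Ooperator).
  by rewrite addrA !addrK.
- move=> u v w /=.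
  rewrite (trir_beta_tril r_l_comm alphaT) -[X in X - _]addrA.
  by rewrite (tril_beta_trirD r_additive r_mul T_additive alphaT T_Ooperator) addrK.
Qed.
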